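(* Let $N$ be a near-ring. Then a subset $P\subseteq N$ is an equivalence class of some congruence on $N$ if and only if $P$ is a paragon in $\mathrm{T}(N)$.
   Context: A near-ring is $(N,+,\cdot)$ with $(N,+)$ a group, $\cdot$ associative, and $n(m+m')=nm+nm'$. A congruence on $N$ is an equivalence relation compatible with $+$ and $\cdot$. $\mathrm{T}(N)$ is the set $N$ with ternary operation $[a,b,c]=a-b+c$ and the multiplication of $N$. A heap is a set with a ternary operation satisfying $[a_1,a_2,[a_3,a_4,a_5]]=[[a_1,a_2,a_3],a_4,a_5]$ and $[a,a,b]=b=[b,a,a]$. A normal sub-heap is a non-empty subset $S$ closed under $[-,-,-]$ with $[[a,e,s],a,e]\in S$ for all $a$ and $e,s\in S$; $a\sim_S b$ iff $[a,b,s]\in S$ for some (equivalently all) $s\in S$. A sub-heap $S$ is closed if $[ts',ts,s]\in S$ and $[s't,st,s]\in S$ for all $s,s'\in S$, $t$. A paragon is a non-empty normal sub-heap $P$ all of whose $\sim_P$-classes are closed sub-heaps. *)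

Record nearRing := NearRing {
  carrier :> Type;
  nr_add : carrier -> carrier -> carrier;
  nr_opp : carrier -> carrier;
  nr_zero : carrier;
  nr_mul : carrier -> carrier -> carrier;
  nr_addA : forall a b c, nr_add a (nr_add b c) = nr_add (nr_add a b) c;
  nr_add0r : forall a, nr_add nr_zero a = a;
  nr_addr0 : forall a, nr_add a nr_zero = a;
  nr_addNr : forall a, nr_add (nr_opp a) a = nr_zero;
  nr_addrN : forall a, nr_add a (nr_opp a) = nr_zero;
  nr_mulA : forall a b c, nr_mul a (nr_mul b c) = nr_mul (nr_mul a b) c;
  nr_mulDr : forall n m m', nr_mul n (nr_add m m') = nr_add (nr_mul n m) (nr_mul n m')
}.

Set Implicit Arguments.
Section TN.
Variable N : nearRing.

Definition congruence (R : N -> N -> Prop) : Prop :=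
  (forall a, R a a) /\
  (forall a b, R a b -> R b a) /\
  (forall a b c, R a b -> R b c -> R a c) /\
  (forall a b c d, R a b -> R c d -> R (nr_add N a c) (nr_add N b d)) /\
  (forall a b c d, R a b -> R c d -> R (nr_mul N a c) (nr_mul N b d)).

Definition is_class_of (R : N -> N -> Prop) (P : N -> Prop) : Prop :=
  exists a : N, forall x, P x <-> R a x.

(* The truss T(N): ternary heap operation [a,b,c] = a - b + c,
   multiplication that of N. *)
Definition tern (a b c : N) : N := nr_add N (nr_add N a (nr_opp N b)) c.

Definition sub_heap (S : N -> Prop) : Prop :=
  forall a b c, S a -> S b -> S c -> S (tern a b c).

Definition normal_sub_heap (S : N -> Prop) : Prop :=
  (exists s, S s) /\ sub_heap S /\
  (forall a e s, S e -> S s -> S (tern (tern a e s) a e)).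

Definition heap_rel (S : N -> Prop) (a b : N) : Prop :=
  exists s, S s /\ S (tern a b s).

Definition closed_sub_heap (S : N -> Prop) : Prop :=
  sub_heap S /\
  (forall s s' t, S s -> S s' ->
     S (tern (nr_mul N t s') (nr_mul N t s) s) /\
     S (tern (nr_mul N s' t) (nr_mul N s t) s)).

Definition paragon (P : N -> Prop) : Prop :=
  (exists p, P p) /\ normal_sub_heap P /\
  (forall a : N, closed_sub_heap (fun b => heap_rel P a b)).

End TN.
Arguments congruence {N} R.
Arguments is_class_of {N} R P.
Arguments paragon {N} P.
Arguments tern {N} a b c.
Arguments sub_heap {N} S.
Arguments normal_sub_heap {N} S.
Arguments heap_rel {N} S a b.
Arguments closed_sub_heap {N} S.

From Stdlib Require Import Setoid.

Set Implicit Arguments.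
Unset Strict Implicit.

(* A congruence R is compatible with [-,-,-], so its classes are closed
   sub-heaps, and for the class P of a, b ~_P c unfolds to [b,c,a] R a, i.e.
   to b R c; hence P is a paragon.  Conversely, for a paragon P the relation
   ~_P is an equivalence having P as a class; normality of P makes it
   compatible with addition, and closedness of the classes of c and of a
   gives ac ~_P ad and ad ~_P bd, hence compatibility with multiplication. *)

Section GroupLaws.
Variable N : nearRing.
Local Notation "a + b" := (nr_add N a b).
Local Notation "- a" := (nr_opp N a).
Local Notation "0" := (nr_zero N).

Lemma addrA_rev (a b c : N) : (a + b) + c = a + (b + c).
Proof. symmetry; apply nr_addA. Qed.

Lemma addKr (a b : N) : a + (- a + b) = b.
Proof. rewrite nr_addA, nr_addrN, nr_add0r; reflexivity. Qed.

Lemma addNKr (a b : N) : - a + (a + b) = b.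
Proof. rewrite nr_addA, nr_addNr, nr_add0r; reflexivity. Qed.

Lemma oppK (a : N) : - - a = a.
Proof.
  rewrite <- (nr_addr0 N (- - a)), <- (nr_addNr N a), nr_addA, nr_addNr, nr_add0r.
  reflexivity.
Qed.

Lemma oppD (a b : N) : - (a + b) = - b + - a.
Proof.
  assert (E : (a + b) + (- b + - a) = 0).
  { rewrite addrA_rev, addKr, nr_addrN; reflexivity. }
  rewrite <- (nr_addr0 N (- (a + b))), <- E, nr_addA, nr_addNr, nr_add0r.
  reflexivity.
Qed.

Lemma oppr0 : - 0 = 0.
Proof. rewrite <- (nr_add0r N (- 0)), nr_addrN; reflexivity. Qed.

End GroupLaws.

Ltac group_eq :=
  unfold tern;
  repeat rewrite ?oppD, ?oppK, ?oppr0, ?addrA_rev, ?addKr, ?addNKr,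
    ?nr_add0r, ?nr_addr0, ?nr_addrN, ?nr_addNr;
  reflexivity.

Lemma ternKl (N : nearRing) (a b : N) : tern a a b = b.
Proof. group_eq. Qed.

Section CongruenceClass.
Variables (N : nearRing) (R : N -> N -> Prop).
Hypothesis congR : congruence R.

Lemma congr_refl (a : N) : R a a.
Proof. destruct congR as (Hrefl & _); apply Hrefl. Qed.

Lemma congr_sym (a b : N) : R a b -> R b a.
Proof. destruct congR as (_ & Hsym & _); apply Hsym. Qed.

Lemma congr_add (a b c d : N) :
  R a b -> R c d -> R (nr_add N a c) (nr_add N b d).
Proof. destruct congR as (_ & _ & _ & Hadd & _); apply Hadd. Qed.

Lemma congr_mul (a b c d : N) :
  R a b -> R c d -> R (nr_mul N a c) (nr_mul N b d).
Proof. destruct congR as (_ & _ & _ & _ & Hmul); apply Hmul. Qed.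

Lemma congr_opp (a b : N) : R a b -> R (nr_opp N a) (nr_opp N b).
Proof.
  intros Hab.
  pose proof (congr_add (congr_add (congr_refl (nr_opp N a)) (congr_sym Hab))
                        (congr_refl (nr_opp N b))) as H.
  assert (Ea : nr_add N (nr_add N (nr_opp N a) b) (nr_opp N b) = nr_opp N a)
    by group_eq.
  assert (Eb : nr_add N (nr_add N (nr_opp N a) a) (nr_opp N b) = nr_opp N b)
    by group_eq.
  rewrite Ea, Eb in H; exact H.
Qed.

Lemma congr_tern (a a' b b' c c' : N) :
  R a a' -> R b b' -> R c c' -> R (tern a b c) (tern a' b' c').
Proof. intros; unfold tern; auto using congr_add, congr_opp. Qed.

Lemma congr_class_sub_heap (b : N) : sub_heap (R b).
Proof.
  intros x y z Hx Hy Hz.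
  rewrite <- (ternKl b b) at 1.
  apply congr_tern; assumption.
Qed.

Lemma congr_class_closed (b : N) : closed_sub_heap (R b).
Proof.
  split; [apply congr_class_sub_heap|].
  intros s s' t Hs Hs'.
  split.
  - rewrite <- (ternKl (nr_mul N t b) b) at 1.
    apply congr_tern; auto using congr_mul, congr_refl.
  - rewrite <- (ternKl (nr_mul N b t) b) at 1.
    apply congr_tern; auto using congr_mul, congr_refl.
Qed.

Variables (a : N) (P : N -> Prop).
Hypothesis P_class : forall x, P x <-> R a x.

Lemma heap_rel_classE (b c : N) : heap_rel P b c <-> R b c.
Proof.
  split.
  - intros (s & Hs & Hbcs). rewrite P_class in Hs, Hbcs.
    assert (H : R (tern (tern b c s) s c) (tern a a c))
      by (apply congr_tern; auto using congr_sym, congr_refl).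
    assert (Eb : tern (tern b c s) s c = b) by group_eq.
    rewrite Eb, ternKl in H; exact H.
  - intros Hbc. exists a. rewrite !P_class.
    split; [apply congr_refl|].
    rewrite <- (ternKl c a) at 1.
    apply congr_tern; auto using congr_sym, congr_refl.
Qed.

Lemma paragon_congr_class : paragon P.
Proof.
  assert (Pa : P a) by (apply P_class, congr_refl).
  assert (heapP : sub_heap P).
  { intros x y z. rewrite !P_class. apply congr_class_sub_heap. }
  split; [exists a; exact Pa|]. split.
  - split; [exists a; exact Pa|]. split; [exact heapP|].
    intros x e s. rewrite !P_class. intros He Hs.
    assert (E : a = tern (tern x a a) x a) by group_eq.
    rewrite E at 1.
    apply congr_tern; [apply congr_tern|..]; auto using congr_refl.
  - intros b.
    assert (E : forall c, heap_rel P b c <-> R b c) by apply heap_rel_classE.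
    split.
    + intros x y z. rewrite !E. apply congr_class_sub_heap.
    + intros s s' t. rewrite !E. apply congr_class_closed.
Qed.

End CongruenceClass.

Section HeapRelation.
Variables (N : nearRing) (P : N -> Prop) (p : N).
Hypotheses (heapP : sub_heap P) (Pp : P p).

Lemma heap_relE (x y : N) : heap_rel P x y <-> P (tern x y p).
Proof.
  split.
  - intros (s & Ps & Pxys).
    assert (E : tern x y p = tern (tern x y s) s p) by group_eq.
    rewrite E; auto.
  - intros Pxyp. exists p; auto.
Qed.

Lemma heap_rel_refl (x : N) : heap_rel P x x.
Proof. apply heap_relE; rewrite ternKl; exact Pp. Qed.

Lemma heap_rel_sym (x y : N) : heap_rel P x y -> heap_rel P y x.
Proof.
  rewrite !heap_relE. intros Pxy.
  assert (E : tern y x p = tern p (tern x y p) p) by group_eq.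
  rewrite E; auto.
Qed.

Lemma heap_rel_trans (x y z : N) :
  heap_rel P x y -> heap_rel P y z -> heap_rel P x z.
Proof.
  rewrite !heap_relE. intros Pxy Pyz.
  assert (E : tern x z p = tern (tern x y p) p (tern y z p)) by group_eq.
  rewrite E; auto.
Qed.

Lemma heap_rel_class (x : N) : P x <-> heap_rel P p x.
Proof.
  rewrite heap_relE. split; intros Px.
  - apply heapP; auto.
  - assert (E : x = tern p (tern p x p) p) by group_eq.
    rewrite E; auto.
Qed.

Lemma heap_rel_add (a b c d : N) :
  normal_sub_heap P -> heap_rel P a b -> heap_rel P c d ->
  heap_rel P (nr_add N a c) (nr_add N b d).
Proof.
  intros (_ & _ & normalP). rewrite !heap_relE. intros Pab Pcd.
  pose proof (normalP (nr_add N a p) p (tern c d p) Pp Pcd) as Pacd.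
  assert (E : tern (nr_add N a c) (nr_add N b d) p
            = tern (tern (tern (nr_add N a p) p (tern c d p)) (nr_add N a p) p)
                   p (tern a b p)) by group_eq.
  rewrite E; auto.
Qed.

Lemma heap_rel_mull (a c d : N) :
  closed_sub_heap (heap_rel P c) -> heap_rel P c d ->
  heap_rel P (nr_mul N a c) (nr_mul N a d).
Proof.
  intros [_ closed_c] Hcd.
  destruct (closed_c c d a (heap_rel_refl c) Hcd) as [Hacd _].
  rewrite heap_relE in Hacd |- *.
  assert (E : tern (nr_mul N a c) (nr_mul N a d) p
            = tern c (tern (nr_mul N a d) (nr_mul N a c) c) p) by group_eq.
  rewrite E; exact Hacd.
Qed.

Lemma heap_rel_mulr (a b d : N) :
  closed_sub_heap (heap_rel P a) -> heap_rel P a b ->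
  heap_rel P (nr_mul N a d) (nr_mul N b d).
Proof.
  intros [_ closed_a] Hab.
  destruct (closed_a a b d (heap_rel_refl a) Hab) as [_ Habd].
  rewrite heap_relE in Habd |- *.
  assert (E : tern (nr_mul N a d) (nr_mul N b d) p
            = tern a (tern (nr_mul N b d) (nr_mul N a d) a) p) by group_eq.
  rewrite E; exact Habd.
Qed.

End HeapRelation.

Lemma paragon_congruence (N : nearRing) (P : N -> Prop) :
  paragon P -> congruence (heap_rel P).
Proof.
  intros ((p & Pp) & normalP & closedP).
  assert (heapP : sub_heap P) by apply normalP.
  repeat split.
  - apply (heap_rel_refl heapP Pp).
  - apply (heap_rel_sym heapP Pp).
  - apply (heap_rel_trans heapP Pp).
  - intros a b c d. apply (heap_rel_add heapP Pp normalP).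
  - intros a b c d Hab Hcd.
    apply (heap_rel_trans heapP Pp) with (nr_mul N a d).
    + apply (heap_rel_mull heapP Pp); auto.
    + apply (heap_rel_mulr heapP Pp); auto.
Qed.

Theorem corollary3p15 (N : nearRing) (P : N -> Prop) :
  (exists R : N -> N -> Prop, congruence R /\ is_class_of R P) <-> paragon P.
Proof.
  split.
  - intros (R & congR & a & P_class).
    exact (paragon_congr_class congR P_class).
  - intros paragonP.
    pose proof paragonP as ((p & Pp) & (_ & heapP & _) & _).
    exists (heap_rel P). split.
    + apply paragon_congruence; exact paragonP.
    + exists p. apply (heap_rel_class heapP Pp).
Qed.
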